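(* The following two statements are equivalent. (i) (Edmonds–Giles statement) For every digraph $D=(V,A)$ and every weight $w\in\{0,1\}^A$ such that $D$ has a dicut, if $\tau$ denotes the minimum weight $w(C)$ of a dicut $C$, then there exist $\tau$ dijoins $J_1,\dots,J_\tau$ of $D$ such that every arc $e$ lies in at most $w_e$ of them. (ii) For every undirected graph $G$ and every integer $\tau>0$, every $\tau$-SCO $x$ of $G$ can be decomposed into $\tau$ SCO's, i.e. there exist strongly connected orientations $O_1,\dots,O_\tau$ of $G$ with $x=\sum_{i=1}^\tau \chi_{O_i}$.
   Context: Graphs and digraphs are finite and loopless; parallel edges/arcs allowed. For a digraph, $\delta^+(U)$ / $\delta^-(U)$ denote arcs leaving/entering $U$; a dicut is $\delta^+_D(U)$ with $\emptyset\neq U\subsetneq V$ and $\delta^-_D(U)=\emptyset$; a dijoin is an arc set meeting every dicut. For an undirected graph $G=(V,E)$, $\vec G=(V,E^+\cup E^-)$ is the digraph obtained by replacing each edge $e=\{u,v\}$ by two arcs $e^+=(u,v)$ and $e^-=(v,u)$ (the choice of which is $e^+$ is arbitrary). An orientation of $G$ is a set $O\subseteq E^+\cup E^-$ containing exactly one of $e^+,e^-$ for each $e\in E$; it is a strongly connected orientation (SCO) if $\delta^+_{\vec G}(U)\cap O\neq\emptyset$ for all $\emptyset\neq U\subsetneq V$. $\chi_O$ is its characteristic vector. For an integer $\tau>0$, a $\tau$-SCO of $G$ is an integral vector $x\in\mathbb{Z}^{E^+\cup E^-}$ with $x_{e^+},x_{e^-}\ge0$ and $x_{e^+}+x_{e^-}=\tau$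 for all $e\in E$, and $x(\delta^+_{\vec G}(U))\ge\tau$ for all $\emptyset\neq U\subsetneq V$. *)

From mathcomp Require Import all_boot.
Set Implicit Arguments. Unset Strict Implicit. Unset Printing Implicit Defensive.

Definition loopless_digraph (V A : finType) (tl hd : A -> V) : Prop :=
  forall a, tl a != hd a.

Definition dout (V A : finType) (tl hd : A -> V) (U : {set V}) : {set A} :=
  [set a | (tl a \in U) && (hd a \notin U)].
Definition din (V A : finType) (tl hd : A -> V) (U : {set V}) : {set A} :=
  [set a | (hd a \in U) && (tl a \notin U)].

Definition proper_nonempty (V : finType) (U : {set V}) : bool :=
  (U != set0) && (U != setT).

Definition is_dicut (V A : finType) (tl hd : A -> V) (C : {set A}) : Prop :=
  exists U : {set V}, [/\ proper_nonempty U, din tl hd U = set0 & C = dout tl hd U].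

Definition is_dijoin (V A : finType) (tl hd : A -> V) (J : {set A}) : Prop :=
  forall C, is_dicut tl hd C -> J :&: C != set0.

Definition weight (A : finType) (w : A -> nat) (C : {set A}) : nat := \sum_(a in C) w a.

Definition EdmondsGiles : Prop :=
  forall (V A : finType) (tl hd : A -> V) (w : A -> nat),
    loopless_digraph tl hd ->
    (forall a, w a <= 1) ->
    forall tau : nat,
      (exists C, is_dicut tl hd C /\ weight w C = tau) ->
      (forall C, is_dicut tl hd C -> tau <= weight w C) ->
      exists J : 'I_tau -> {set A},
        (forall i, is_dijoin tl hd (J i)) /\
        (forall a, #|[set i | a \in J i]| <= w a).

(* ends e = (u, v); loopless: u != v. The bidirected graph vec G has arc set
   E * bool, where (e, true) = e^+ = (u, v) and (e, false) = e^- = (v, u). *)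
Definition loopless_graph (V E : finType) (ends : E -> V * V) : Prop :=
  forall e, (ends e).1 != (ends e).2.

Definition btail (V E : finType) (ends : E -> V * V) (a : E * bool) : V :=
  if a.2 then (ends a.1).1 else (ends a.1).2.
Definition bhead (V E : finType) (ends : E -> V * V) (a : E * bool) : V :=
  if a.2 then (ends a.1).2 else (ends a.1).1.

Definition bout (V E : finType) (ends : E -> V * V) (U : {set V}) : {set E * bool} :=
  dout (btail ends) (bhead ends) U.

Definition is_orientation (E : finType) (O : {set E * bool}) : Prop :=
  forall e : E, ((e, true) \in O) (+) ((e, false) \in O).

Definition is_SCO (V E : finType) (ends : E -> V * V) (O : {set E * bool}) : Prop :=
  is_orientation O /\
  forall U : {set V}, proper_nonempty U -> bout ends U :&: O != set0.

(* tau-SCO: x integral (here nat-valued, hence >= 0), x_{e+} + x_{e-} = tau,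
   and x(delta^+(U)) >= tau for all nonempty proper U *)
Definition is_tau_SCO (V E : finType) (ends : E -> V * V) (tau : nat)
    (x : E * bool -> nat) : Prop :=
  (forall e : E, x (e, true) + x (e, false) = tau) /\
  (forall U : {set V}, proper_nonempty U -> tau <= \sum_(a in bout ends U) x a).

Definition SCO_decomposition : Prop :=
  forall (V E : finType) (ends : E -> V * V),
    loopless_graph ends ->
    forall (tau : nat), 0 < tau ->
    forall x : E * bool -> nat, is_tau_SCO ends tau x ->
      exists O : 'I_tau -> {set E * bool},
        (forall i, is_SCO ends (O i)) /\
        (forall a : E * bool, x a = \sum_(i < tau) (a \in O i)).

From mathcomp Require Import all_boot.
Set Implicit Arguments. Unset Strict Implicit. Unset Printing Implicit Defensive.

(** (i) -> (ii): turn every edge e = uv of G into a new vertex e, entered by two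
    weight-0 arcs from u and v and by tau weight-1 arcs, x(e^+) of them from u and
    x(e^-) from v.  A dicut either is the in-star of some new vertex (weight tau)
    or contains the weight-1 arcs lying over a cut of G (weight >= tau since x is a
    tau-SCO).  Each of the resulting tau disjoint dijoins meets every in-star in
    exactly one arc, i.e. chooses an orientation of G, which is strongly connected
    because every cut of G lifts to a dicut; and since each weight-1 arc lies in
    exactly one dijoin, these orientations add up to x.

    (ii) -> (i): double every arc a = uv of D into two parallel edges, one with
    x = (tau, 0) and one with x = (tau - w a, w a).  This is a tau-SCO: a cut not
    left by any arc of D is the complement of the shore of a dicut.  In a
    decomposition, every strongly connected orientation must cross each dicut
    backwards, which only the reversed second copies can do, so these copies form
    dijoins, and arc a is reversed in exactly w a of them. *)

Lemma sum_nat_of_bool (T : finType) (P : pred T) :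
  \sum_i (P i : nat) = #|[set i | P i]|.
Proof. by rewrite -sum1dep_card [RHS]big_mkcond; apply: eq_bigr => i _; case: (P i). Qed.

Lemma card_ord_ltn n k : k <= n -> #|[set j : 'I_n | j < k]| = k.
Proof.
move=> le_kn; have widen_inj : injective (widen_ord le_kn).
  by move=> i j /(congr1 val) eq_ij; apply: val_inj.
have -> : [set j : 'I_n | j < k] = widen_ord le_kn @: [set: 'I_k].
  apply/setP => j; rewrite inE; apply/idP/imsetP => [lt_jk | [i _ ->]].
    by exists (Ordinal lt_jk); last exact: val_inj.
  by rewrite /= ltn_ord.
by rewrite card_imset // cardsT card_ord.
Qed.

Lemma card_ord_ltn_eq n k d : k <= n ->
  #|[set j : 'I_n | (j < k) == d]| = if d then k else n - k.
Proof.
move=> le_kn; case: d.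
  by rewrite -[RHS](card_ord_ltn le_kn); apply: eq_card => j; rewrite !inE eqb_id.
have -> : [set j : 'I_n | (j < k) == false] = ~: [set j : 'I_n | j < k].
  by apply/setP => j; rewrite !inE eqbF_neg.
by rewrite cardsCs setCK card_ord card_ord_ltn.
Qed.

Lemma sum_card_fibers (I J : finType) (f : I -> J) (S : {set J}) :
  \sum_(b in S) #|[set q | f q == b]| = #|f @^-1: S|.
Proof.
rewrite -sum1_card (partition_big f (mem S)) /=; last by move=> q; rewrite inE.
apply: eq_bigr => b Sb; rewrite -sum1_card; apply: eq_bigl => q; rewrite !inE.
by case: eqP => [->|]; rewrite ?Sb ?andbF.
Qed.

Lemma leq_sum_subset (T : finType) (S S' : {set T}) (F : T -> nat) :
  S \subset S' -> \sum_(a in S) F a <= \sum_(a in S') F a.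
Proof.
move=> /subsetP sub_SS'.
by apply: (sub_le_big leqnn (fun m n => leq_addr n m)) => a /sub_SS'.
Qed.

Section RelationChoice.

Variables (T : finType) (R : T -> T -> bool) (g : T -> T).
Hypotheses (R_col_le1 : forall j, #|[set i | R i j]| <= 1) (R_g : forall i, R i (g i)).

Lemma relation_choice_inj : injective g.
Proof.
move=> i i' eq_g; apply: (card_le1_eqP (R_col_le1 (g i)));
  by rewrite inE ?R_g // eq_g R_g.
Qed.

Lemma relation_choice_unique i j : R i j -> j = g i.
Proof.
move=> Rij; have [g' gK g'K] := injF_bij relation_choice_inj.
suff -> : i = g' j by rewrite g'K.
apply: (card_le1_eqP (R_col_le1 j)); rewrite inE // -{2}[j]g'K; exact: R_g.
Qed.

End RelationChoice.

Lemma din_eq0_tail (V A : finType) (tl hd : A -> V) (U : {set V}) a :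
  din tl hd U = set0 -> hd a \in U -> tl a \in U.
Proof.
move=> din0 hdU; apply/negPn/negP => tlU.
have : a \in din tl hd U by rewrite inE hdU tlU.
by rewrite din0 inE.
Qed.

Lemma proper_nonemptyC (V : finType) (U : {set V}) :
  proper_nonempty U -> proper_nonempty (~: U).
Proof.
case/andP => U0 UT; apply/andP; split.
  by apply: contraNneq UT => /(congr1 (@setC _)); rewrite setCK setC0 => ->.
by apply: contraNneq U0 => /(congr1 (@setC _)); rewrite setCK setCT => ->.
Qed.

Lemma ends_in_btail_bhead (V E : finType) (ends : E -> V * V) (W : {set V}) b :
  ((ends b.1).1 \in W) && ((ends b.1).2 \in W) =
  (btail ends b \in W) && (bhead ends b \in W).
Proof. by rewrite /btail /bhead; case: b.2 => //; rewrite andbC. Qed.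

Section SplitDigraph.

Variables (V E : finType) (ends : E -> V * V) (tau : nat) (x : E * bool -> nat).
Hypothesis x_sum : forall e, x (e, true) + x (e, false) = tau.
Hypothesis x_cut : forall W : {set V},
  proper_nonempty W -> tau <= \sum_(b in bout ends W) x b.

Local Notation vertex := (V + E)%type.
Local Notation arc := ((E * bool) + (E * 'I_tau))%type.

(* [inl b] is the weight-0 arc from the tail of [b] to [b.1]; [inr (e, j)] is the
   [j]-th weight-1 arc into [e], which leaves the tail of [e^+] iff [j < x (e, true)]. *)
Definition copy_arc (q : E * 'I_tau) : E * bool := (q.1, q.2 < x (q.1, true)).

Definition split_arc (a : arc) : E * bool :=
  match a with inl b => b | inr q => copy_arc q end.

Definition split_tail (a : arc) : vertex := inl (btail ends (split_arc a)).
Definition split_head (a : arc) : vertex := inr (split_arc a).1.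
Definition split_weight (a : arc) : nat := if a is inr _ then 1 else 0.

Lemma split_loopless : loopless_digraph split_tail split_head.
Proof. by []. Qed.

Lemma split_weight_le1 a : split_weight a <= 1.
Proof. by case: a. Qed.

Lemma weight_split C : weight split_weight C = #|[set q | inr q \in C]|.
Proof.
rewrite /weight big_mkcond big_sumType /= big1 => [|b _]; last by case: ifP.
by rewrite add0n -sum_nat_of_bool; apply: eq_bigr => q _; case: ifP.
Qed.

Lemma card_copies e d : #|[set j : 'I_tau | (j < x (e, true)) == d]| = x (e, d).
Proof.
have x_le : x (e, true) <= tau by rewrite -(x_sum e) leq_addr.
by rewrite card_ord_ltn_eq //; case: d => //; rewrite -(x_sum e) addKn.
Qed.

Lemma card_copy_fiber b : #|[set q | copy_arc q == b]| = x b.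
Proof.
case: b => e d; rewrite -card_copies -[RHS]mul1n -(cards1 e) -cardsX.
apply: eq_card => -[e' j]; rewrite !inE /copy_arc xpair_eqE /=.
by case: eqP => [->|].
Qed.

Lemma card_copies_of e : #|[set q : E * 'I_tau | q.1 == e]| = tau.
Proof.
rewrite -[RHS]card_ord -cardsT -[RHS]mul1n -(cards1 e) -cardsX.
by apply: eq_card => -[e' j]; rewrite !inE andbT.
Qed.

Definition star e : {set arc} := dout split_tail split_head (~: [set inr e]).

Lemma star_dicut e : is_dicut split_tail split_head (star e).
Proof.
exists (~: [set inr e]); split => //.
- apply/andP; split; first by apply/set0Pn; exists (inl (ends e).1); rewrite !inE.
  by apply/negP => /eqP/setP/(_ (inr e)); rewrite !inE eqxx.
- by apply/setP => a; rewrite !inE andbF.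
Qed.

Lemma weight_star e : weight split_weight (star e) = tau.
Proof.
by rewrite weight_split -[RHS](card_copies_of e); apply: eq_card => q; rewrite !inE negbK.
Qed.

Lemma split_dicut_weight C :
  is_dicut split_tail split_head C -> tau <= weight split_weight C.
Proof.
move=> [U [U_proper din0 ->]]; rewrite weight_split.
pose W := [set v | inl v \in U].
have ends_W e : inr e \in U -> ((ends e).1 \in W) && ((ends e).2 \in W).
  move=> eU; rewrite !inE.
  by rewrite (din_eq0_tail (a := inl (e, true)) din0 eU)
             (din_eq0_tail (a := inl (e, false)) din0 eU).
case/andP: U_proper => /set0Pn [z zU]; rewrite -properT => /properP [_ [y _ yU]].
have [W_full | W_not_full] := eqVneq W setT.
  case: y yU => [v vU | e eU].
    by have := in_setT v; rewrite -W_full inE (negbTE vU).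
  rewrite -[X in X <= _](card_copies_of e); apply/subset_leq_card/subsetP => q.
  rewrite !inE => /eqP q_e.
  have : btail ends (copy_arc q) \in W by rewrite W_full inE.
  by rewrite inE /split_tail /split_head /= q_e eU andbT.
have W_proper : proper_nonempty W.
  rewrite /proper_nonempty W_not_full andbT; apply/set0Pn.
  case: z zU => [v vU | e /ends_W /andP [eW _]]; last by exists (ends e).1.
  by exists v; rewrite inE.
apply: leq_trans (x_cut W_proper) _.
rewrite (eq_bigr _ (fun b _ => esym (card_copy_fiber b))) sum_card_fibers.
apply/subset_leq_card/subsetP => q; rewrite !inE => /andP [tail_W head_W].
rewrite /split_tail /split_head /= tail_W /=; apply: contra head_W => /ends_W.
by rewrite (ends_in_btail_bhead ends W (copy_arc q)) !inE => /andP [_].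
Qed.

Definition orient (p : E -> 'I_tau) : {set E * bool} :=
  [set b | (p b.1 < x (b.1, true)) == b.2].

Lemma orient_SCO (J : {set arc}) (p : E -> 'I_tau) :
    is_dijoin split_tail split_head J ->
    (forall b, inl b \notin J) -> (forall e j, inr (e, j) \in J -> j = p e) ->
  is_SCO ends (orient p).
Proof.
move=> J_dijoin J_copies J_p; split=> [e | W W_proper].
  by rewrite !inE /=; case: (_ < _).
pose U := [set z : vertex | match z with
                            | inl v => v \in W
                            | inr e => ((ends e).1 \in W) && ((ends e).2 \in W) end].
have U_proper : proper_nonempty U.
  case/andP: W_proper => /set0Pn [v vW] W_not_full; apply/andP; split.
    by apply/set0Pn; exists (inl v); rewrite inE.
  by apply: contraNneq W_not_full => /setP U_full; apply/eqP/setP => u;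
     have := U_full (inl u); rewrite !inE.
have din0 : din split_tail split_head U = set0.
  apply/setP => a; rewrite !inE /split_head /split_tail.
  rewrite (ends_in_btail_bhead ends W (split_arc a)).
  by case: (btail _ _ \in W); rewrite ?andbF.
have /set0Pn [a] := J_dijoin _ (ex_intro _ U (And3 U_proper din0 erefl)).
rewrite inE => /andP [aJ aU]; case: a aJ aU => [b | [e j]].
  by rewrite (negbTE (J_copies b)).
move=> /J_p -> aU; apply/set0Pn; exists (copy_arc (e, p e)).
rewrite !inE eqxx andbT; move: aU; rewrite !inE /split_tail /split_head /=.
by rewrite (ends_in_btail_bhead ends W (copy_arc (e, p e))); case: (btail _ _ \in W).
Qed.

End SplitDigraph.

Lemma EdmondsGiles_SCO_decomposition : EdmondsGiles -> SCO_decomposition.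
Proof.
move=> EG V E ends _ tau tau_gt0 x [x_sum x_cut].
have [e0 _ | no_edge] := pickP (fun _ : E => true); last first.
  exists (fun=> set0); split=> [i | [e d]]; last by have := no_edge e.
  split=> [e | W W_proper]; first by have := no_edge e.
  have := x_cut W W_proper; rewrite big1 => [|[e d] _]; last by have := no_edge e.
  by rewrite leqn0 (gtn_eqF tau_gt0).
have [J [J_dijoin J_weight]] := EG _ _ _ _ _ (@split_loopless _ _ ends tau x)
  (@split_weight_le1 _ tau) tau
  (ex_intro _ _ (conj (star_dicut ends tau x e0) (weight_star ends tau x e0)))
  (split_dicut_weight x_sum x_cut).
have J_copies i b : inl b \notin J i.
  apply/negP => bJ; have := J_weight (inl b); rewrite leqn0 cards_eq0 => /eqP/setP/(_ i).
  by rewrite !inE bJ.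
have /fin_all_exists [p Jp] : forall ie : 'I_tau * E, exists j, inr (ie.2, j) \in J ie.1.
  move=> [i e]; have /set0Pn [[b | [e' j]]] := J_dijoin i _ (star_dicut ends tau x e).
    by rewrite inE (negbTE (J_copies i b)).
  by rewrite !inE /split_head negbK => /andP [e'J /eqP [<-]]; exists j.
have col_le1 e j : #|[set i | inr (e, j) \in J i]| <= 1 := J_weight (inr (e, j)).
have p_inj e := relation_choice_inj (R := fun i j => inr (e, j) \in J i)
  (col_le1 e) (fun i => Jp (i, e)).
have p_unique e := relation_choice_unique (R := fun i j => inr (e, j) \in J i)
  (col_le1 e) (fun i => Jp (i, e)).
exists (fun i => orient x (fun e => p (i, e))); split => [i | [e d]].
  by apply: (orient_SCO (J_dijoin i) (J_copies i)) => e j /p_unique.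
rewrite (eq_bigr (fun i => ((p (i, e) < x (e, true)) == d) : nat)) => [|i _];
  last by rewrite inE.
by rewrite -[LHS](card_copies x_sum) -sum_nat_of_bool (reindex_inj (p_inj e)).
Qed.

Section DoubledGraph.

Variables (V A : finType) (tl hd : A -> V) (tau : nat) (w : A -> nat).

Definition doubled_ends (e : A * bool) : V * V := (tl e.1, hd e.1).

(* [(a, false)] is the copy of [a] kept along [a]; [(a, true)] is reversed [w a] times. *)
Definition dicut_x (b : A * bool * bool) : nat :=
  match b with
  | ((a, true), true) => tau - w a
  | ((a, true), false) => w a
  | ((_, false), d) => if d then tau else 0
  end.

Lemma doubled_loopless : loopless_digraph tl hd -> loopless_graph doubled_ends.
Proof. by move=> tl_hd e; exact: tl_hd. Qed.

Lemma dicut_x_tau_SCO :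
    (forall a, w a <= tau) -> (forall C, is_dicut tl hd C -> tau <= weight w C) ->
  is_tau_SCO doubled_ends tau dicut_x.
Proof.
move=> w_le tau_le_dicut; split=> [[a []] | U U_proper] /=; [exact: subnK | exact: addn0 |].
have [a /andP [tlU hdU] | no_out] := pickP [pred a | (tl a \in U) && (hd a \notin U)].
  rewrite (bigD1 ((a, false), true)) ?leq_addr //.
  by rewrite inE /btail /bhead /= tlU hdU.
have din0 : din tl hd (~: U) = set0.
  by apply/setP => a; rewrite !inE negbK andbC; exact: no_out.
have dicut_out : is_dicut tl hd (dout tl hd (~: U)).
  by exists (~: U); split=> //; exact: proper_nonemptyC.
apply: leq_trans (tau_le_dicut _ dicut_out) _.
rewrite /weight (eq_bigr (fun a => dicut_x ((a, true), false))) // -big_imset /=.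
  apply: leq_sum_subset; apply/subsetP => _ /imsetP [a aout ->].
  by move: aout; rewrite !inE /btail /bhead /= negbK andbC.
by move=> a1 a2 _ _ [].
Qed.

Lemma SCO_dijoin (O : {set A * bool * bool}) :
    is_SCO doubled_ends O -> (forall a, ((a, false), false) \notin O) ->
  is_dijoin tl hd [set a | ((a, true), false) \in O].
Proof.
move=> [_ O_strong] O_forward C [U [U_proper din0 ->]].
have /set0Pn [[[a c] d]] := O_strong _ (proper_nonemptyC U_proper).
rewrite !inE /btail /bhead /= negbK; case: d => /andP [/andP [tail_out head_in] acO].
  have : a \in din tl hd U by rewrite inE head_in tail_out.
  by rewrite din0 inE.
case: c acO => acO; last by rewrite (negbTE (O_forward a)) in acO.
by apply/set0Pn; exists a; rewrite !inE acO head_in.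
Qed.

End DoubledGraph.

Lemma SCO_decomposition_EdmondsGiles : SCO_decomposition -> EdmondsGiles.
Proof.
move=> SCO_dec V A tl hd w tl_hd w_le1 tau _ tau_le_dicut.
have [-> | tau_gt0] := posnP tau.
  exists (fun=> set0); split=> [[] // | a].
  by apply: leq_trans (max_card _) _; rewrite card_ord.
have w_le a : w a <= tau := leq_trans (w_le1 a) tau_gt0.
have [O [O_SCO O_x]] := SCO_dec _ _ _ (doubled_loopless tl_hd) _ tau_gt0 _
  (dicut_x_tau_SCO w_le tau_le_dicut).
exists (fun i => [set a | ((a, true), false) \in O i]); split=> [i | a].
  apply: SCO_dijoin (O_SCO i) _ => a; apply/negP => aO.
  by have := O_x ((a, false), false); rewrite (bigD1 i) //= aO.
have /= -> := O_x ((a, true), false).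
by rewrite sum_nat_of_bool; apply/eq_leq/eq_card => i; rewrite !inE.
Qed.

Theorem theorem6 : EdmondsGiles <-> SCO_decomposition.
Proof.
split; [exact: EdmondsGiles_SCO_decomposition | exact: SCO_decomposition_EdmondsGiles].
Qed.
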